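(* Let $\bar Q$ be a gentle bound quiver with finitely many strings, and define $\pi_\downarrow,\pi^\uparrow:\mathrm{Bicl}(\bar Q)\to\mathrm{Bicl}(\bar Q)$ by $\pi_\downarrow(S)=\{\sigma\in\mathcal S^\pm(\bar Q):\Sigma_{\mathrm{bot}}(\sigma)\subseteq S\}$ and $\pi^\uparrow(S)=\{\sigma\in\mathcal S^\pm(\bar Q):\Sigma_{\mathrm{top}}(\sigma)\cap S\ne\emptyset\}$. Then (i) $\pi_\downarrow(S)\subseteq S\subseteq\pi^\uparrow(S)$ for every $S\in\mathrm{Bicl}(\bar Q)$; (ii) $\pi_\downarrow\circ\pi_\downarrow=\pi_\downarrow\circ\pi^\uparrow=\pi_\downarrow$ and $\pi^\uparrow\circ\pi^\uparrow=\pi^\uparrow\circ\pi_\downarrow=\pi^\uparrow$; (iii) $\pi_\downarrow$ and $\pi^\uparrow$ are order preserving. Consequently the fibers of $\pi^\uparrow$ and $\pi_\downarrow$ coincide, and the relation $S\equiv T\iff\pi_\downarrow(S)=\pi_\downarrow(T)\iff\pi^\uparrow(S)=\pi^\uparrow(T)$ is an order congruence on $\mathrm{Bicl}(\bar Q)$.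
   Context: A gentle bound quiver is $\bar Q=(Q,I)$, $Q$ finite (paths composed left to right), $I$ admissible generated by length-two paths, each vertex with at most two incoming and two outgoing arrows, and for each arrow $\beta$ at most one $\alpha$ with $t(\alpha)=s(\beta),\alpha\beta\notin I$, at most one with $\alpha\beta\in I$, and dually at most one $\gamma$ with $s(\gamma)=t(\beta),\beta\gamma\notin I$ and at most one with $\beta\gamma\in I$. Strings: composable reduced words $\alpha_1^{\epsilon_1}\cdots\alpha_\ell^{\epsilon_\ell}$ in arrows and inverse arrows with no factor $\pi^{\pm1}$ for a path $\pi\in I$, or length-zero $\varepsilon_v$; $\mathcal S^\pm(\bar Q)$ = strings up to inversion. Top/bottom substrings of a string $\sigma=\alpha_1^{\epsilon_1}\cdots\alpha_\ell^{\epsilon_\ell}$: a substring $\alpha_i^{\epsilon_i}\cdots\alpha_j^{\epsilon_j}$ (including length-zero substrings at vertices of $\sigma$) is top if ($i=1$ or $\epsilon_{i-1}=-1$) and ($j=\ell$ or $\epsilon_{j+1}=1$), i.e. at each endpoint $\sigma$ ends or has an arrow pointing away; bottom if at each endpoint $\sigma$ ends or has an arrow pointing towards it. $\Sigma_{\mathrm{top}}(\sigma),\Sigma_{\mathrm{bot}}(\sigma)$ are the sets of undirected strings so obtained (both contain $\sigma$). Closure: $\sigma\circ\tau$ = set of undirected strings obtained by joining an endpoint of $\sigma$ to an endpoint of $\tau$ by one arrow $\gamma^{\pm1}$, $\gamma\in Q_1$; $\overline S$ = union of all $\sigma_1\circ\cdots\circ\sigma_\ell$, $\ell\ge1$, $\sigma_i\in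 S$. Biclosed: $S$ and its complement in $\mathcal S^\pm(\bar Q)$ are closed. $\mathrm{Bicl}(\bar Q)$: biclosed sets ordered by inclusion (a lattice). It is known that $\pi_\downarrow(S),\pi^\uparrow(S)$ are biclosed for biclosed $S$. An order congruence on a poset $P$ is an equivalence relation whose classes are intervals and such that the maps sending an element to the minimum (resp. maximum) of its class are order preserving. *)

From mathcomp Require Import all_boot.
Set Implicit Arguments. Unset Strict Implicit. Unset Printing Implicit Defensive.

Section Gentle.
Variables (V A : finType) (src tgt : A -> V) (rel : A -> A -> bool).
(* rel a b  <->  the length-two path  a b  (t a = s b) is a generator of I.
   Paths are composed left to right. *)

Definition arrow_composable (a b : A) : bool := tgt a == src b.

Definition gentle : Prop :=
  (forall a b, rel a b -> tgt a = src b) /\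
  (* admissibility: every sufficiently long path lies in I, i.e. contains a
     generator as a factor (I is then contained in paths of length >= 2) *)
  (exists N : nat, forall (a0 : A) (p : seq A), N <= size p ->
       path arrow_composable a0 p ->
       ~~ path (fun a b => arrow_composable a b && ~~ rel a b) a0 p) /\
  (forall v : V, #|[pred a | tgt a == v]| <= 2) /\
  (forall v : V, #|[pred a | src a == v]| <= 2) /\
  (forall b : A, #|[pred a | (tgt a == src b) && ~~ rel a b]| <= 1) /\
  (forall b : A, #|[pred a | (tgt a == src b) && rel a b]| <= 1) /\
  (forall b : A, #|[pred c | (tgt b == src c) && ~~ rel b c]| <= 1) /\
  (forall b : A, #|[pred c | (tgt b == src c) && rel b c]| <= 1).

(** Letters: (a, true) = a^{+1}, (a, false) = a^{-1}. *)
Definition letter := (A * bool)%type.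
Definition lsrc (l : letter) : V := if l.2 then src l.1 else tgt l.1.
Definition ltgt (l : letter) : V := if l.2 then tgt l.1 else src l.1.
Definition flip (l : letter) : letter := (l.1, ~~ l.2).

(** A (directed) word: start vertex together with a list of letters;
    (v, [::]) is the length-zero string eps_v. *)
Definition Str := (V * seq letter)%type.

Fixpoint walk (v : V) (w : seq letter) : bool :=
  if w is l :: w' then (lsrc l == v) && walk (ltgt l) w' else true.

Definition endv (v : V) (w : seq letter) : V := last v [seq ltgt l | l <- w].

(* forbidden consecutive pairs: non-reduced, or a factor pi or pi^{-1}
   with pi a generator of I *)
Definition bad_pair (l1 l2 : letter) : bool :=
  [|| (l1.1 == l2.1) && (l1.2 != l2.2),
      [&& l1.2, l2.2 & rel l1.1 l2.1]
    | [&& ~~ l1.2, ~~ l2.2 & rel l2.1 l1.1]].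

Definition is_string (x : Str) : Prop :=
  walk x.1 x.2 /\ sorted (fun l1 l2 => ~~ bad_pair l1 l2) x.2.

Definition str_inv (x : Str) : Str := (endv x.1 x.2, rev [seq flip l | l <- x.2]).

Definition finitely_many_strings : Prop :=
  exists L : seq Str, forall x, is_string x -> x \in L.

(** Sets of undirected strings are encoded as inversion-closed sets of
    directed strings. *)
Definition strset := Str -> Prop.
Definition ssubset (S T : strset) : Prop := forall x, S x -> T x.
Definition usingle (x : Str) : strset := fun y => y = x \/ y = str_inv x.

(** Substrings between vertex positions a <= b (0 <= a <= b <= length). *)
Definition substr (x : Str) (a b : nat) : Str :=
  (endv x.1 (take a x.2), take (b - a) (drop a x.2)).

Definition is_top (w : seq letter) (a b : nat) : bool :=
  ((a == 0) || (if onth w a.-1 is Some l then ~~ l.2 else false)) &&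
  ((b == size w) || (if onth w b is Some l then l.2 else false)).

Definition is_bot (w : seq letter) (a b : nat) : bool :=
  ((a == 0) || (if onth w a.-1 is Some l then l.2 else false)) &&
  ((b == size w) || (if onth w b is Some l then ~~ l.2 else false)).

Definition Sigma_top (x : Str) : strset := fun y =>
  exists a b, a <= b <= size x.2 /\ is_top x.2 a b /\ usingle (substr x a b) y.

Definition Sigma_bot (x : Str) : strset := fun y =>
  exists a b, a <= b <= size x.2 /\ is_bot x.2 a b /\ usingle (substr x a b) y.

Definition str_join (x : Str) (l : letter) (y : Str) : Str := (x.1, x.2 ++ l :: y.2).

Definition str_comp (x y : Str) : strset := fun z =>
  exists x' y' (l : letter), usingle x x' /\ usingle y y' /\
    ltgt l = y'.1 /\ is_string (str_join x' l y') /\ usingle (str_join x' l y') z.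

Definition comp_set (X : strset) (y : Str) : strset :=
  fun z => exists x, X x /\ str_comp x y z.

Definition iter_comp (x1 : Str) (rest : seq Str) : strset :=
  foldl comp_set (usingle x1) rest.

Definition str_closure (S : strset) : strset := fun z =>
  exists x1 rest, S x1 /\ (forall y, y \in rest -> S y) /\ iter_comp x1 rest z.

Definition str_closed (S : strset) : Prop := ssubset (str_closure S) S.

Definition str_complement (S : strset) : strset := fun x => is_string x /\ ~ S x.

Definition biclosed (S : strset) : Prop :=
  ssubset S is_string /\ (forall x, S x -> S (str_inv x)) /\
  str_closed S /\ str_closed (str_complement S).

Definition pi_down (S : strset) : strset := fun x =>
  is_string x /\ ssubset (Sigma_bot x) S.

Definition pi_up (S : strset) : strset := fun x =>
  is_string x /\ exists y, Sigma_top x y /\ S y.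

End Gentle.

Section OrderCongruence.
Variables (X : Type) (P : X -> Prop) (le : X -> X -> Prop) (R : X -> X -> Prop).

Definition class_min (x m : X) : Prop :=
  P m /\ R x m /\ forall y, P y -> R x y -> le m y.
Definition class_max (x m : X) : Prop :=
  P m /\ R x m /\ forall y, P y -> R x y -> le y m.

Definition order_congruence : Prop :=
  (forall x, P x -> R x x) /\
  (forall x y, P x -> P y -> R x y -> R y x) /\
  (forall x y z, P x -> P y -> P z -> R x y -> R y z -> R x z) /\
  (forall x, P x -> exists m M, P m /\ P M /\
      forall y, P y -> (R x y <-> le m y /\ le y M)) /\
  (forall x y mx my, P x -> P y -> le x y ->
      class_min x mx -> class_min y my -> le mx my) /\
  (forall x y mx my, P x -> P y -> le x y ->
      class_max x mx -> class_max y my -> le mx my).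
End OrderCongruence.

From mathcomp Require Import all_boot zify.
From Stdlib Require Import Classical FunctionalExtensionality PropExtensionality.
Set Implicit Arguments. Unset Strict Implicit. Unset Printing Implicit Defensive.

(* Let [Sigma true x] and [Sigma false x] be the bottom and top substrings of
   [x], [pi_all s S] the strings all of whose [Sigma s]-substrings lie in [S],
   and [pi_ex s S] those having one in [S]; thus [pi_down = pi_all true],
   [pi_up = pi_ex false], and complementation exchanges [pi_all s] and
   [pi_ex s].  As [Sigma s] is reflexive and transitive, (i), (iii) and most
   of (ii) are formal.  The key identity [pi_down (pi_up S) = pi_down S] is an
   induction on length: if every bottom substring of [x] lies in [pi_up S],
   then [x] has a top substring [t] in [S]; the pieces of [x] on either side
   of [t] are shorter bottom substrings, hence in [S], and [x] is obtained by
   joining them to [t] with single arrows, so [x] is in [S].  Exchanging top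
   and bottom and passing to the complement of [S] gives
   [pi_up (pi_down S) = pi_up S].  An inversion-closed set of strings is
   closed iff it contains every string whose two pieces around some letter
   lie in it; this local form of closure shows that [pi_down S] and
   [pi_up S] are biclosed.  Finally, for monotone [d <= id <= u] with
   [d \o d = d \o u = d] and [u \o d = u], the kernel of [d] is an order
   congruence whose classes are the intervals [[d x, u x]]. *)

Lemma onth_some (T : Type) (s : seq T) i : i < size s -> exists x, onth s i = Some x.
Proof.
move=> lt_i_s; case E: onth => [x|]; first by exists x.
by move: (onthTE s i); rewrite E lt_i_s.
Qed.

Lemma onth_rev (T : Type) (s : seq T) i :
  i < size s -> onth (rev s) i = onth s (size s - i.+1).
Proof. by move=> lt_i_s; rewrite !onthE map_rev nth_rev ?size_map. Qed.

Section Strings.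
Variables (V A : finType) (src tgt : A -> V) (rel : A -> A -> bool).
Local Notation letter := (letter A).
Local Notation Str := (Str V A).
Local Notation strset := (strset V A).
Local Notation lsrc := (lsrc src tgt).
Local Notation ltgt := (ltgt src tgt).
Local Notation walk := (walk src tgt).
Local Notation endv := (endv src tgt).
Local Notation inv := (str_inv src tgt).
Local Notation substr := (substr src tgt).
Local Notation is_string := (is_string src tgt rel).
Local Notation usingle := (usingle src tgt).
Local Notation compl := (str_complement src tgt rel).

(** * Substrings *)

Lemma endv_cat v s1 s2 : endv v (s1 ++ s2) = endv (endv v s1) s2.
Proof. by rewrite /endv map_cat last_cat. Qed.

Lemma endv_rcons v s l : endv v (rcons s l) = ltgt l.
Proof. by rewrite /endv map_rcons last_rcons. Qed.

Lemma walk_cat v s1 s2 : walk v (s1 ++ s2) = walk v s1 && walk (endv v s1) s2.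
Proof. by elim: s1 v => [|l s1 IH] v //=; rewrite IH andbA. Qed.

Lemma walk_take v w a : walk v w -> walk v (take a w).
Proof. by rewrite -{1}(cat_take_drop a w) walk_cat => /andP[]. Qed.

Lemma walk_drop v w a : walk v w -> walk (endv v (take a w)) (drop a w).
Proof. by rewrite -{1}(cat_take_drop a w) walk_cat => /andP[]. Qed.

Lemma ltgt_flip l : ltgt (flip l) = lsrc l. Proof. by case: l => a []. Qed.
Lemma lsrc_flip l : lsrc (flip l) = ltgt l. Proof. by case: l => a []. Qed.
Lemma flipK : involutive (@flip A). Proof. by case=> a []. Qed.

Lemma endv_inv v w : walk v w -> endv (endv v w) (rev (map (@flip A) w)) = v.
Proof.
case: w => [|l w] //= /andP[/eqP <- _].
by rewrite rev_cons endv_rcons ltgt_flip.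
Qed.

Lemma walk_inv v w : walk v w -> walk (endv v w) (rev (map (@flip A) w)).
Proof.
elim: w v => [|l w IH] v //= /andP[/eqP <- Hw].
rewrite rev_cons -cats1 walk_cat IH //=.
by rewrite (endv_inv Hw) lsrc_flip eqxx.
Qed.

Lemma bad_pair_flip l1 l2 : bad_pair rel (flip l2) (flip l1) = bad_pair rel l1 l2.
Proof.
by case: l1 => a1 []; case: l2 => a2 []; rewrite /bad_pair /= ?andbF ?andbT ?orbF // eq_sym.
Qed.

Lemma str_inv_string x : is_string x -> is_string (inv x).
Proof.
case: x => v w [Hw Hs]; split; first exact: walk_inv.
rewrite /= rev_sorted sorted_map.
by apply: sub_sorted Hs => l1 l2; rewrite /= bad_pair_flip.
Qed.

Lemma str_invK x : walk x.1 x.2 -> inv (inv x) = x.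
Proof.
case: x => v w /= Hw; rewrite /str_inv /= endv_inv //.
by rewrite map_rev revK (mapK flipK).
Qed.

Lemma substr_string x a b : is_string x -> is_string (substr x a b).
Proof.
case: x => v w [Hw Hs]; split; first exact/walk_take/walk_drop.
exact/take_sorted/drop_sorted.
Qed.

Lemma size_substr x a b : b <= size x.2 -> size (substr x a b).2 = b - a.
Proof. by move=> bn; rewrite /substr /= size_takel // size_drop; lia. Qed.

Lemma substr_full x : substr x 0 (size x.2) = x.
Proof. by case: x => v w; rewrite /substr /= take0 drop0 subn0 take_size. Qed.

Lemma substr_substr x a b c d : c <= d -> d <= b - a ->
  substr (substr x a b) c d = substr x (a + c) (a + d).
Proof.
case: x => v w cd db; rewrite /substr /=.
have -> : drop c (take (b - a) (drop a w)) = take (b - a - c) (drop (a + c) w).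
  have -> : b - a = (b - a - c) + c by lia.
  by rewrite -take_drop drop_drop addnC addnK.
rewrite take_takel; last lia.
rewrite -endv_cat take_takel; last lia.
by rewrite -takeD; congr (_, take _ _); lia.
Qed.

Lemma str_inv_substr x a b : walk x.1 x.2 -> a <= b -> b <= size x.2 ->
  inv (substr x a b) = substr (inv x) (size x.2 - b) (size x.2 - a).
Proof.
case: x => v w /= Hw ab bn; rewrite /str_inv /substr /=; congr (_, _).
- rewrite -endv_cat -takeD subnKC // take_rev size_map.
  have -> : size w - (size w - b) = b by lia.
  rewrite -map_drop -{2}(cat_take_drop b w) endv_cat.
  by rewrite endv_inv //; apply: walk_drop.
- rewrite drop_rev size_map take_rev size_takel ?size_map; last lia.
  have -> : size w - (size w - b) = b by lia.
  have -> : b - (size w - a - (size w - b)) = a by lia.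
  by rewrite map_take map_drop take_drop subnK.
Qed.

Lemma substr_join x i m k l : i <= m -> m < k -> k <= size x.2 ->
  onth x.2 m = Some l ->
  substr x i k = str_join (substr x i m) l (substr x m.+1 k) /\
  ltgt l = (substr x m.+1 k).1.
Proof.
case: x => v w im mk /= kn Hl.
have nth_m := onth_nth l l w m Hl.
have mn : m < size w by lia.
rewrite /substr /str_join /=; split.
  have -> : k - i = (m - i) + (k - m) by lia.
  rewrite takeD drop_drop subnK // (drop_nth l mn) nth_m.
  by have -> : k - m = (k - m.+1).+1 by lia.
by rewrite (take_nth l mn) endv_rcons nth_m.
Qed.

Lemma join_split x l z : ltgt l = z.1 ->
  let J := str_join x l z in
  substr J 0 (size x.2) = x /\ substr J (size x.2).+1 (size J.2) = z.
Proof.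
case: x => v w; case: z => u s /= E; rewrite /substr /str_join /=; split.
  by rewrite take0 drop0 subn0 take_size_cat.
rewrite -cat_rcons take_size_cat ?size_rcons // drop_size_cat ?size_rcons //.
by rewrite endv_rcons E size_cat size_rcons addKn take_size.
Qed.

(** * Top and bottom substrings *)

Definition sign_before (s : bool) (w : seq letter) (a : nat) : bool :=
  (a == 0) || (if onth w a.-1 is Some l then l.2 == s else false).

Definition sign_after (s : bool) (w : seq letter) (b : nat) : bool :=
  (b == size w) || (if onth w b is Some l then l.2 == s else false).

Definition bounded (s : bool) (w : seq letter) (a b : nat) : bool :=
  sign_before s w a && sign_after (~~ s) w b.

Lemma is_bot_bounded w a b : is_bot w a b = bounded true w a b.
Proof.
rewrite /is_bot /bounded /sign_before /sign_after.
by case: onth => [[? []]|]; case: onth => [[? []]|].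
Qed.

Lemma is_top_bounded w a b : is_top w a b = bounded false w a b.
Proof.
rewrite /is_top /bounded /sign_before /sign_after.
by case: onth => [[? []]|]; case: onth => [[? []]|].
Qed.

Lemma sign_after_size s w : sign_after s w (size w).
Proof. by rewrite /sign_after eqxx. Qed.

Lemma sign_after_pred s w a : sign_before s w a -> 0 < a -> sign_after s w a.-1.
Proof. by rewrite /sign_before /sign_after; case: a => //= a ->; rewrite orbT. Qed.

Lemma sign_before_succ s w b : sign_after s w b -> b < size w -> sign_before s w b.+1.
Proof. by rewrite /sign_after /sign_before /= => /orP[/eqP ->|->]; rewrite ?ltnn ?orbT. Qed.

Lemma sign_before_substr s w a b c : a <= c -> c <= b -> b <= size w ->
  sign_before s (take (b - a) (drop a w)) (c - a) = (c == a) || sign_before s w c.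
Proof.
move=> ac cb bn; have [->|ne] := eqVneq c a; first by rewrite subnn.
rewrite /sign_before; have -> : (c - a == 0) = false by lia.
have -> : (c == 0) = false by lia.
rewrite !onthE map_take nth_take ?map_drop ?nth_drop; last lia.
by have -> : a + (c - a).-1 = c.-1 by lia.
Qed.

Lemma sign_after_substr s w a b d : a <= d -> d <= b -> b <= size w ->
  sign_after s (take (b - a) (drop a w)) (d - a) = (d == b) || sign_after s w d.
Proof.
move=> ad db bn; have [->|ne] := eqVneq d b.
  by rewrite /sign_after size_takel ?eqxx // size_drop; lia.
rewrite /sign_after size_takel ?size_drop; last lia.
have -> : (d - a == b - a) = false by lia.
have -> : (d == size w) = false by lia.
rewrite !onthE map_take nth_take ?map_drop ?nth_drop; last lia.
by have -> : a + (d - a) = d by lia.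
Qed.

Lemma bounded_substr s x a b c d : a <= c -> c <= d -> d <= b -> b <= size x.2 ->
  bounded s (substr x a b).2 (c - a) (d - a) =
  ((c == a) || sign_before s x.2 c) && ((d == b) || sign_after (~~ s) x.2 d).
Proof.
move=> ac cd db bn; rewrite /bounded sign_before_substr ?sign_after_substr //; lia.
Qed.

Lemma bounded_inv s w c d : c <= d -> d <= size w ->
  bounded s (rev (map (@flip A) w)) (size w - d) (size w - c) = bounded s w c d.
Proof.
move=> cd dn; rewrite /bounded andbC /sign_before /sign_after size_rev size_map.
congr andb.
- have [->|cpos] := posnP c; first by rewrite subn0 !eqxx.
  have -> : (size w - c == size w) = false by lia.
  rewrite onth_rev size_map; last lia.
  have -> : size w - (size w - c).+1 = c.-1 by lia.
  by rewrite onth_map; case: onth => [[? []]|] //=; case: s.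
- have [->|dl] := eqVneq d (size w); first by rewrite subnn !eqxx.
  have -> : (size w - d == 0) = false by lia.
  rewrite onth_rev size_map; last lia.
  have -> : size w - (size w - d).-1.+1 = d by lia.
  by rewrite onth_map; case: onth => [[? []]|] //=; case: s.
Qed.

Lemma strset_ext (S T : strset) : ssubset S T -> ssubset T S -> S = T.
Proof.
move=> ST TS; apply: functional_extensionality => x.
by apply: propositional_extensionality; split; [apply: ST | apply: TS].
Qed.

Definition Sigma (s : bool) (x : Str) : strset := fun y =>
  exists a b, [/\ a <= b <= size x.2, bounded s x.2 a b & usingle (substr x a b) y].

Lemma Sigma_botE : Sigma_bot src tgt = Sigma true.
Proof.
apply: functional_extensionality => x; apply: strset_ext => y [a [b]].
  by rewrite is_bot_bounded => -[ab [bd u]]; exists a, b.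
by rewrite -is_bot_bounded => -[ab bd u]; exists a, b.
Qed.

Lemma Sigma_topE : Sigma_top src tgt = Sigma false.
Proof.
apply: functional_extensionality => x; apply: strset_ext => y [a [b]].
  by rewrite is_top_bounded => -[ab [bd u]]; exists a, b.
by rewrite -is_top_bounded => -[ab bd u]; exists a, b.
Qed.

Lemma usingle_string x y : is_string x -> usingle x y -> is_string y.
Proof. by move=> Hx [->|->] //; apply: str_inv_string. Qed.

Lemma Sigma_substr s x a b : a <= b -> b <= size x.2 -> bounded s x.2 a b ->
  Sigma s x (substr x a b).
Proof. by move=> ab bn Hab; exists a, b; rewrite ab bn; split => //; left. Qed.

Lemma Sigma_self s x : Sigma s x x.
Proof.
rewrite -{2}(substr_full x); apply: Sigma_substr => //.
by rewrite /bounded sign_after_size.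
Qed.

Lemma Sigma_string s x y : is_string x -> Sigma s x y -> is_string y.
Proof. by move=> Hx [a [b [_ _ u]]]; apply: usingle_string u; apply: substr_string. Qed.

Lemma Sigma_left_flank s x a : a <= size x.2 -> 0 < a -> sign_before (~~ s) x.2 a ->
  Sigma s x (substr x 0 a.-1).
Proof.
move=> an apos Ha; apply: Sigma_substr => //; first lia.
exact: sign_after_pred.
Qed.

Lemma Sigma_right_flank s x b : b < size x.2 -> sign_after s x.2 b ->
  Sigma s x (substr x b.+1 (size x.2)).
Proof.
move=> bn Hb; apply: Sigma_substr => //.
by rewrite /bounded sign_before_succ ?sign_after_size.
Qed.

Lemma Sigma_restr s x a b c d : a <= c -> c <= d -> d <= b -> b <= size x.2 ->
  (c == a) || sign_before s x.2 c -> (d == b) || sign_after (~~ s) x.2 d ->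
  Sigma s (substr x a b) (substr x c d).
Proof.
move=> ac cd db bn Hc Hd.
have -> : substr x c d = substr (substr x a b) (c - a) (d - a).
  by rewrite substr_substr; [congr substr | |]; lia.
apply: Sigma_substr; rewrite ?size_substr ?bounded_substr ?Hc ?Hd //; lia.
Qed.

Lemma Sigma_inv s x y : is_string x -> Sigma s (inv x) y -> Sigma s x y.
Proof.
case: x => v w Hx [c [d [/andP[cd]]]]; rewrite /= size_rev size_map => dn.
have -> : c = size w - (size w - c) by lia.
have -> : d = size w - (size w - d) by lia.
rewrite bounded_inv; [|lia|lia] => Hcd.
rewrite -str_inv_substr /=; [|by case: Hx|lia|lia] => u.
exists (size w - d), (size w - c); split => //; first by apply/andP; split => /=; lia.
case: u => ->; first by right.
by left; rewrite str_invK //; case: (substr_string (size w - d) (size w - c) Hx).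
Qed.

Lemma Sigma_trans s x y z : is_string x -> Sigma s x y -> Sigma s y z -> Sigma s x z.
Proof.
move=> Hx [a [b [/andP[ab bn] Hab u]]].
suff Sub : forall z, Sigma s (substr x a b) z -> Sigma s x z.
  by case: u => -> Hz; apply: Sub => //; apply: Sigma_inv => //; apply: substr_string.
move=> {}z [c [d [/andP[cd]]]]; rewrite size_substr // => db Hcd uz.
exists (a + c), (a + d); split; [lia | | by rewrite -(substr_substr x cd db)].
case/andP: Hab => Ha Hb; move: Hcd.
rewrite -{1}[c](addKn a) -{1}[d](addKn a) bounded_substr; [|lia|lia|lia|lia].
by rewrite /bounded; case/andP => /orP[/eqP -> | ->] /orP[/eqP -> | ->]; rewrite ?Ha ?Hb.
Qed.

Lemma Sigma_split s J m c d : m < size J.2 -> c <= d <= size J.2 -> bounded s J.2 c d ->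
  [\/ Sigma s (substr J 0 m) (substr J c d),
      Sigma s (substr J m.+1 (size J.2)) (substr J c d)
    | [/\ c <= m < d, Sigma s (substr J 0 m) (substr J c m)
        & Sigma s (substr J m.+1 (size J.2)) (substr J m.+1 d)]].
Proof.
move=> mn /andP[cd dn] /andP[Hc Hd].
have [dm|md] := leqP d m.
  by apply: Or31; apply: Sigma_restr; rewrite ?Hc ?Hd ?orbT //; lia.
have [mc|cm] := ltnP m c.
  by apply: Or32; apply: Sigma_restr; rewrite ?Hc ?Hd ?orbT.
apply: Or33; split=> //.
  by apply: Sigma_restr; rewrite ?Hc ?eqxx ?orbT //; lia.
by apply: Sigma_restr; rewrite ?Hd ?eqxx ?orbT.
Qed.

Lemma Sigma_piece s J m : m < size J.2 ->
  Sigma s J (substr J 0 m) \/ Sigma s J (substr J m.+1 (size J.2)).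
Proof.
move=> mn; have [l E] := onth_some mn.
have [ls|lNs] := eqVneq l.2 s.
  by right; apply: Sigma_right_flank; rewrite // /sign_after E ls eqxx orbT.
left; apply: (@Sigma_left_flank s J m.+1) => //.
by rewrite /sign_before /= E; case: (l.2) (s) lNs => -[].
Qed.

(** * Biclosed sets *)

Definition inv_closed (P : strset) : Prop := forall x, P x -> P (inv x).

Definition split_closed (P : strset) : Prop := forall J m, is_string J -> m < size J.2 ->
  P (substr J 0 m) -> P (substr J m.+1 (size J.2)) -> P J.

Lemma inv_closed_usingle P x y : inv_closed P -> P x -> usingle x y -> P y.
Proof. by move=> HP Px [->|->] //; apply: HP. Qed.

Lemma inv_closed_usingle_iff P x y : inv_closed P -> is_string x -> usingle x y -> P y <-> P x.
Proof.
move=> HP [Hx _] [->|->] //; split; last exact: HP.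
by move/HP; rewrite str_invK.
Qed.

Lemma inv_closed_compl P : inv_closed P -> inv_closed (compl P).
Proof.
move=> HP x [Hx nPx]; split; first exact: str_inv_string.
by move=> /HP; rewrite str_invK //; case: Hx.
Qed.

Lemma complK S : ssubset S is_string -> compl (compl S) = S.
Proof.
move=> HS; apply: strset_ext => [x [Hx nnSx] | x Sx].
  by apply: NNPP => nSx; apply: nnSx.
by split; [apply: HS | case=> _; apply].
Qed.

Lemma split_closed_of_closed P : str_closed src tgt rel P -> split_closed P.
Proof.
move=> HP J m HJ mn PL PR; have [l E] := onth_some mn.
have [EJ El] := substr_join (leq0n m) mn (leqnn _) E; rewrite substr_full in EJ.
apply: HP; exists (substr J 0 m), [:: substr J m.+1 (size J.2)]; split=> //.
split; first by move=> y; rewrite inE => /eqP ->.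
exists (substr J 0 m); split; first by left.
exists (substr J 0 m), (substr J m.+1 (size J.2)), l.
by rewrite -EJ; split; [left | split; [left | split=> //; split=> //; left]].
Qed.

Lemma split_closed_join P x l z : split_closed P -> P x -> P z -> ltgt l = z.1 ->
  is_string (str_join x l z) -> P (str_join x l z).
Proof.
move=> HP Px Pz Elz HJ; have [EL ER] := join_split x Elz.
by apply: (HP _ (size x.2)); rewrite ?EL ?ER //= size_cat /= addnS ltnS leq_addr.
Qed.

Lemma closed_of_split_closed P : inv_closed P -> split_closed P -> str_closed src tgt rel P.
Proof.
move=> Hinv Hsplit z [x1 [rest [Px1 [Prest]]]]; rewrite /iter_comp.
have : ssubset (usingle x1) P by move=> y; apply: inv_closed_usingle.
elim: rest (usingle x1) Prest z => [|y rest IH] X Prest z XP //=; first exact: XP.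
have yP : P y by apply: Prest; rewrite mem_head.
apply: IH => [y' y'_rest | z' [x [Xx [x' [y' [l [ux [uy [Ely [HJ uJ]]]]]]]]]].
  by apply: Prest; rewrite inE y'_rest orbT.
apply: inv_closed_usingle uJ => //; apply: split_closed_join => //.
  exact: inv_closed_usingle (XP _ Xx) ux.
exact: inv_closed_usingle yP uy.
Qed.

Lemma biclosedP S : biclosed src tgt rel S <->
  [/\ ssubset S is_string, inv_closed S, split_closed S & split_closed (compl S)].
Proof.
split=> [[HS [Hinv [HC HCc]]] | [HS Hinv Hsplit Hsplitc]].
  by split=> //; [apply: split_closed_of_closed HC | apply: split_closed_of_closed HCc].
do 3!split=> //; first exact: closed_of_split_closed.
by apply: closed_of_split_closed => //; apply: inv_closed_compl.
Qed.

Lemma biclosed_compl S : biclosed src tgt rel S -> biclosed src tgt rel (compl S).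
Proof.
move=> /biclosedP[HS Hinv Hsplit Hsplitc]; apply/biclosedP; split=> //.
- by move=> x [].
- exact: inv_closed_compl.
- by rewrite complK.
Qed.

Lemma split_closed_substr P J i m k : split_closed P -> is_string J ->
  i <= m -> m < k -> k <= size J.2 ->
  P (substr J i m) -> P (substr J m.+1 k) -> P (substr J i k).
Proof.
move=> HP HJ im mk kn PL PR.
have Hs : size (substr J i k).2 = k - i by apply: size_substr.
apply: (HP _ (m - i)); first exact: substr_string.
- by rewrite Hs; lia.
- by rewrite substr_substr ?addn0 ?subnKC //; lia.
- rewrite Hs substr_substr; [|lia|lia].
  have -> : i + (m - i).+1 = m.+1 by lia.
  by rewrite subnKC //; lia.
Qed.

Lemma split_closed_flanks P J c d : split_closed P -> is_string J -> c <= d <= size J.2 ->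
  (0 < c -> P (substr J 0 c.-1)) -> P (substr J c d) ->
  (d < size J.2 -> P (substr J d.+1 (size J.2))) -> P J.
Proof.
move=> HP HJ /andP[cd dn] PL PM PR.
have P0d : P (substr J 0 d).
  have [c0|cpos] := posnP c; first by rewrite c0 in PM.
  by apply: (split_closed_substr HP HJ _ _ dn (PL cpos)); rewrite ?prednK //; lia.
rewrite -(substr_full J); have [dE|dlt] := eqVneq d (size J.2); first by rewrite -dE.
have dlt' : d < size J.2 by lia.
exact: (split_closed_substr HP HJ _ dlt' _ P0d (PR dlt')).
Qed.

(** * The maps [pi_down] and [pi_up] *)

Definition pi_all (s : bool) (S : strset) : strset := fun x =>
  is_string x /\ ssubset (Sigma s x) S.

Definition pi_ex (s : bool) (S : strset) : strset := fun x =>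
  is_string x /\ exists y, Sigma s x y /\ S y.

Lemma pi_downE : pi_down src tgt rel = pi_all true.
Proof. by apply: functional_extensionality => S; rewrite /pi_down Sigma_botE. Qed.

Lemma pi_upE : pi_up src tgt rel = pi_ex false.
Proof. by apply: functional_extensionality => S; rewrite /pi_up Sigma_topE. Qed.

Lemma pi_all_sub s S : ssubset (pi_all s S) S.
Proof. by move=> x [_]; apply; apply: Sigma_self. Qed.

Lemma sub_pi_ex s S : ssubset S is_string -> ssubset S (pi_ex s S).
Proof. by move=> HS x Sx; split; [apply: HS | exists x; split=> //; apply: Sigma_self]. Qed.

Lemma pi_all_mono s S T : ssubset S T -> ssubset (pi_all s S) (pi_all s T).
Proof. by move=> ST x [Hx Sx]; split=> // y /Sx; apply: ST. Qed.

Lemma pi_ex_mono s S T : ssubset S T -> ssubset (pi_ex s S) (pi_ex s T).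
Proof. by move=> ST x [Hx [y [xy Sy]]]; split=> //; exists y; split=> //; apply: ST. Qed.

Lemma pi_all_Sigma s S x y : pi_all s S x -> Sigma s x y -> pi_all s S y.
Proof.
move=> [Hx Sx] xy; split; first exact: Sigma_string xy.
by move=> z yz; apply: Sx; apply: Sigma_trans yz.
Qed.

Lemma pi_all_idem s S : pi_all s (pi_all s S) = pi_all s S.
Proof.
apply: strset_ext; first exact: pi_all_sub.
by move=> x Sx; split; [case: Sx | move=> y; apply: pi_all_Sigma].
Qed.

Lemma pi_ex_idem s S : pi_ex s (pi_ex s S) = pi_ex s S.
Proof.
apply: strset_ext; last by apply: sub_pi_ex => x [].
move=> x [Hx [y [xy [_ [z [yz Sz]]]]]]; split=> //.
by exists z; split=> //; apply: Sigma_trans yz.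
Qed.

Lemma compl_pi_all s S : compl (pi_all s S) = pi_ex s (compl S).
Proof.
apply: strset_ext => x [Hx].
  move=> nSx; split=> //; apply: NNPP => none; apply: nSx; split=> // y xy.
  by apply: NNPP => nSy; apply: none; exists y; split=> //; split=> //; exact: Sigma_string xy.
by move=> [y [xy [_ nSy]]]; split=> // -[_ /(_ y xy)].
Qed.

Lemma compl_pi_ex s S : compl (pi_ex s S) = pi_all s (compl S).
Proof.
apply: strset_ext => x [Hx].
  move=> nSx; split=> // y xy; split; first exact: Sigma_string xy.
  by move=> Sy; apply: nSx; split=> //; exists y.
by move=> Sx; split=> // -[_ [y [xy /(proj2 (Sx y xy))]]].
Qed.

Lemma compl_sub S T : ssubset S is_string -> ssubset (compl T) (compl S) -> ssubset S T.
Proof.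
move=> HS TS x Sx; apply: NNPP => nTx.
by have [_] := TS x (conj (HS x Sx) nTx); apply.
Qed.

Lemma biclosed_pi_all s S : biclosed src tgt rel S -> biclosed src tgt rel (pi_all s S).
Proof.
move=> /biclosedP[HS Hinv Hsplit _]; apply/biclosedP; split.
- by move=> x [].
- by move=> x [Hx Sx]; split; [apply: str_inv_string | move=> y /(Sigma_inv Hx); apply: Sx].
- move=> J m HJ mn [_ SL] [_ SR]; split=> // y [c [d [cdn Hcd uy]]].
  apply/(inv_closed_usingle_iff Hinv (substr_string c d HJ) uy).
  case: (Sigma_split mn cdn Hcd) => [/SL | /SR | [/andP[cm md] /SL Lc /SR Rd]] //.
  by apply: split_closed_substr Lc Rd => //; case/andP: cdn.
- move=> J m HJ mn [_ nL] [_ nR]; split=> // PJ.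
  by case: (Sigma_piece s mn) => /(pi_all_Sigma PJ); [apply: nL | apply: nR].
Qed.

Lemma biclosed_pi_ex s S : biclosed src tgt rel S -> biclosed src tgt rel (pi_ex s S).
Proof.
move=> HS; have Hstr : ssubset S is_string by case: HS.
rewrite -[S]complK // -compl_pi_all; exact/biclosed_compl/biclosed_pi_all/biclosed_compl.
Qed.

Lemma mem_of_pi_all_pi_ex s T y : inv_closed T -> split_closed T ->
  pi_all s (pi_ex (~~ s) T) y -> T y.
Proof.
move=> Hinv Hsplit; have [n] := ubnP (size y.2); elim: n y => // n IH y /ltnSE yn Hy.
have [Hstr Hsub] := Hy.
have [_ [t [[a [b [abn Hab ut]] Tt]]]] := Hsub y (Sigma_self s y).
have [/andP[ab bn] /andP[Ha Hb]] := (abn, Hab); rewrite negbK in Hb.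
apply: (split_closed_flanks Hsplit Hstr abn) => [apos | | blt].
- have yL := Sigma_left_flank (leq_trans ab bn) apos Ha.
  by apply: IH (pi_all_Sigma Hy yL); rewrite size_substr; lia.
- exact/(inv_closed_usingle_iff Hinv (substr_string a b Hstr) ut).
- have yR := Sigma_right_flank blt Hb.
  by apply: IH (pi_all_Sigma Hy yR); rewrite size_substr; lia.
Qed.

Lemma pi_all_pi_ex s S : biclosed src tgt rel S -> pi_all s (pi_ex (~~ s) S) = pi_all s S.
Proof.
move=> HS; have /biclosedP[HSstr Hinv Hsplit _] := HS.
apply: strset_ext; last exact/pi_all_mono/sub_pi_ex.
rewrite -[X in ssubset X _]pi_all_idem; apply: pi_all_mono => y.
exact: mem_of_pi_all_pi_ex.
Qed.

Lemma pi_ex_pi_all s S : biclosed src tgt rel S -> pi_ex s (pi_all (~~ s) S) = pi_ex s S.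
Proof.
move=> HS; apply: strset_ext; first by apply: pi_ex_mono; apply: pi_all_sub.
apply: compl_sub => [x [] //|].
(* complementation turns this inclusion into [pi_all_pi_ex] for [compl S] *)
by rewrite !compl_pi_ex compl_pi_all pi_all_pi_ex //; apply: biclosed_compl.
Qed.

End Strings.

Section KernelCongruence.
Variables (X : Type) (P : X -> Prop) (le : X -> X -> Prop) (d u : X -> X).
Hypotheses (le_trans : forall x y z, le x y -> le y z -> le x z)
  (le_anti : forall x y, le x y -> le y x -> x = y)
  (P_d : forall x, P x -> P (d x)) (P_u : forall x, P x -> P (u x))
  (d_le : forall x, P x -> le (d x) x) (le_u : forall x, P x -> le x (u x))
  (d_mono : forall x y, P x -> P y -> le x y -> le (d x) (d y))
  (u_mono : forall x y, P x -> P y -> le x y -> le (u x) (u y))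
  (d_d : forall x, P x -> d (d x) = d x)
  (d_u : forall x, P x -> d (u x) = d x)
  (u_d : forall x, P x -> u (d x) = u x).

Lemma eq_down_iff_eq_up x y : P x -> P y -> d x = d y <-> u x = u y.
Proof.
move=> Px Py; split=> E; first by rewrite -(u_d Px) -(u_d Py) E.
by rewrite -(d_u Px) -(d_u Py) E.
Qed.

Lemma order_congruence_kernel : order_congruence P le (fun x y => d x = d y).
Proof.
split; first by [].
split; first by move=> x y _ _ ->.
split; first by move=> x y z _ _ _ -> ->.
split.
  move=> x Px; exists (d x), (u x); split; first exact: P_d.
  split; first exact: P_u.
  move=> y Py; split=> [dxy | [dx_y y_ux]].
    split; first by rewrite dxy; apply: d_le.
    by rewrite ((eq_down_iff_eq_up Px Py).1 dxy); apply: le_u.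
  apply: le_anti; first by rewrite -{1}(d_d Px); apply: d_mono => //; apply: P_d.
  by rewrite -(d_u Px); apply: d_mono => //; apply: P_u.
split=> x y mx my Px Py xy [Pmx [dx_mx min_x]] [Pmy [dy_my min_y]].
  apply: (le_trans (min_x _ (P_d Px) (esym (d_d Px)))).
  by apply: le_trans (d_mono Px Py xy) _; rewrite dy_my; apply: d_le.
have ux_umx : u x = u mx by apply/eq_down_iff_eq_up.
apply: (le_trans (le_u Pmx)); rewrite -ux_umx.
by apply: le_trans (u_mono Px Py xy) (min_y _ (P_u Py) (esym (d_u Py))).
Qed.

End KernelCongruence.

Theorem proposition8p5 (V A : finType) (src tgt : A -> V) (rel : A -> A -> bool)
  (Hgentle : gentle src tgt rel)
  (Hfin : finitely_many_strings src tgt rel) :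
  let Bicl := biclosed src tgt rel in
  let pd := pi_down src tgt rel in
  let pu := pi_up src tgt rel in
  (* (i) *)
  (forall S, Bicl S -> ssubset (pd S) S /\ ssubset S (pu S)) /\
  (* (ii) *)
  (forall S, Bicl S ->
     pd (pd S) = pd S /\ pd (pu S) = pd S /\
     pu (pu S) = pu S /\ pu (pd S) = pu S) /\
  (* (iii) *)
  (forall S T, Bicl S -> Bicl T -> ssubset S T ->
     ssubset (pd S) (pd T) /\ ssubset (pu S) (pu T)) /\
  (* fibers coincide *)
  (forall S T, Bicl S -> Bicl T -> (pd S = pd T <-> pu S = pu T)) /\
  (* order congruence *)
  order_congruence Bicl (@ssubset V A) (fun S T => pd S = pd T).
Proof.
move=> Bicl pd pu.
have pdE : pd = pi_all src tgt rel true by rewrite /pd pi_downE.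
have puE : pu = pi_ex src tgt rel false by rewrite /pu pi_upE.
have sub_trans (S T U : strset V A) : ssubset S T -> ssubset T U -> ssubset S U.
  by move=> ST TU x /ST /TU.
have sub_anti := @strset_ext V A.
have Bicl_pd S : Bicl S -> Bicl (pd S) by rewrite pdE; apply: biclosed_pi_all.
have Bicl_pu S : Bicl S -> Bicl (pu S) by rewrite puE; apply: biclosed_pi_ex.
have pd_sub S : Bicl S -> ssubset (pd S) S by rewrite pdE => _; apply: pi_all_sub.
have sub_pu S : Bicl S -> ssubset S (pu S) by rewrite puE => -[HS _]; apply: sub_pi_ex.
have pd_mono S T : Bicl S -> Bicl T -> ssubset S T -> ssubset (pd S) (pd T).
  by rewrite pdE => _ _; apply: pi_all_mono.
have pu_mono S T : Bicl S -> Bicl T -> ssubset S T -> ssubset (pu S) (pu T).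
  by rewrite puE => _ _; apply: pi_ex_mono.
have pd_pd S : Bicl S -> pd (pd S) = pd S by rewrite pdE pi_all_idem.
have pd_pu S : Bicl S -> pd (pu S) = pd S by rewrite pdE puE; apply: pi_all_pi_ex.
have pu_pd S : Bicl S -> pu (pd S) = pu S by rewrite pdE puE; apply: pi_ex_pi_all.
have pu_pu S : pu (pu S) = pu S by rewrite puE pi_ex_idem.
split; first by move=> S HS; split; [apply: pd_sub | apply: sub_pu].
split; first by move=> S HS; rewrite pu_pu pd_pd ?pd_pu ?pu_pd.
split; first by move=> S T HS HT ST; split; [apply: pd_mono | apply: pu_mono].
split; first by move=> S T; apply: (eq_down_iff_eq_up pd_pu pu_pd).
exact: (order_congruence_kernel sub_trans sub_anti Bicl_pd Bicl_pu pd_sub sub_pu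
          pd_mono pu_mono pd_pd pd_pu pu_pd).
Qed.
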